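(* Let $f:\mathbb R^{n+m}\to\mathbb R$ be a $C^5$ function, written $f(\mathbf x,\mathbf y)$ with $\mathbf x\in\mathbb R^n$, $\mathbf y\in\mathbb R^m$, with a critical point at the origin and $f(0)=0$, such that (A1) the Hessian of $f$ at the origin is positive semidefinite of rank $n$ and nullity $m\ge1$, and (A2) its kernel is $\{(0,\mathbf y):\mathbf y\in\mathbb R^m\}$. Let $(\mathbf x'',\mathbf y')$ be a point of the unit sphere in $\mathbb R^{n+m}$ such that $t\mapsto f(\mathbf x''t^2,\mathbf y't)$ vanishes through fourth order in $t$ (its Taylor coefficients at $t=0$ of orders $0,1,2,3,4$ are all zero). Then $\mathbf y'\ne0$; in particular the trajectory $t\mapsto(\mathbf x''t^2,\mathbf y't)$ is $1$-active.
   Context: A $C^k$ vector-valued function $\varphi(t)$ is $k$-vanishing if $\varphi^{(i)}(0)=0$ for $1\le i\le k$, and $k$-active if it is $(k-1)$-vanishing but not $k$-vanishing; thus $1$-active means the first derivative at $t=0$ is nonzero. *)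

From HB Require Import structures.
From mathcomp Require Import all_boot all_order all_algebra.
From mathcomp Require Import all_classical all_reals all_analysis.
Set Implicit Arguments. Unset Strict Implicit. Unset Printing Implicit Defensive.
Import Order.TTheory GRing.Theory Num.Theory.
Import numFieldNormedType.Exports.
Local Open Scope ring_scope.

Section Defs.
Variable R : realType.

Definition evec N (i : 'I_N) : 'rV[R]_N := delta_mx 0 i.

Fixpoint pder N (s : seq 'I_N) (f : 'rV[R]_N -> R) : 'rV[R]_N -> R :=
  match s with
  | [::] => f
  | i :: s' => fun x => 'D_(evec i) (pder s' f) x
  end.

Definition Ck N (k : nat) (f : 'rV[R]_N -> R) : Prop :=
  forall s : seq 'I_N, (size s <= k)%N ->
    continuous (pder s f) /\
    ((size s < k)%N -> forall (i : 'I_N) (x : 'rV[R]_N),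
        derivable (pder s f) x (evec i)).

Definition hessian N (f : 'rV[R]_N -> R) (x : 'rV[R]_N) : 'M[R]_N :=
  \matrix_(i, j) pder [:: i; j] f x.

Definition psd N (A : 'M[R]_N) : Prop :=
  forall v : 'rV[R]_N, 0 <= (v *m A *m v^T) 0 0.

Definition sqnorm N (v : 'rV[R]_N) : R := \sum_(i < N) v 0 i ^+ 2.

Definition k_vanishing (V : normedModType R) (k : nat) (phi : R -> V) : Prop :=
  forall i, (1 <= i <= k)%N -> derive1n i phi 0 = 0.

Definition k_active (V : normedModType R) (k : nat) (phi : R -> V) : Prop :=
  k_vanishing k.-1 phi /\ ~ k_vanishing k phi.

End Defs.

(* If y' = 0 the trajectory reads t |-> f (t^2 x'', 0), the function g (s) = f (s v),
   v = (x'', 0), reparametrised by s = t^2; its fourth derivative at 0 is therefore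
   12 g''(0) = 12 v H v^T, where H is the Hessian at the origin.  A quadratic form of a
   symmetric positive semidefinite matrix vanishes only on its kernel, so (A2) gives
   x'' = 0, contradicting |(x'', y')| = 1.  Once y' <> 0, the velocity (0, y') of the
   trajectory at t = 0 is nonzero, i.e. the trajectory is 1-active.
   The symmetry of H and the identity g'' = v H v^T come from continuous partial
   derivatives through the mean value theorem. *)

From HB Require Import structures.
From mathcomp Require Import all_boot all_order all_algebra.
From mathcomp Require Import all_classical all_reals all_analysis.
From mathcomp Require Import ring lra.
Set Implicit Arguments. Unset Strict Implicit.
Import Order.TTheory GRing.Theory Num.Theory.
Import numFieldNormedType.Exports.
Local Open Scope ring_scope.
Local Open Scope classical_set_scope.

Section DifferenceQuotients.
Variables (R : realType) (V : normedModType R).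

(* Each difference quotient below equals, by the mean value theorem, a value of a
   continuous derivative at a point within O(|h|) of x. *)
Lemma cvg_continuous_witness (q : R -> R) (g : V -> R) (x : V) (K : R) :
  {for x, continuous g} ->
  (forall h : R, h != 0 -> exists2 z, `|z - x| <= `|h| * K & q h = g z) ->
  q h @[h --> 0^'] --> g x.
Proof.
move=> cg hz.
have /choice[z hz'] : forall h : R, exists z : V,
    h != 0 -> `|z - x| <= `|h| * K /\ q h = g z.
  move=> h; have [->|h0] := eqVneq h 0; first by exists x => /eqP.
  by have [z ? ?] := hz h h0; exists z.
have zx : z h @[h --> 0^'] --> x.
  apply/cvgrPdist_le => /= e e0.
  have K1 : 0 < `|K| + 1 by rewrite ltr_wpDl.
  near=> h.
  have h0 : h != 0 by near: h; exact: nbhs_dnbhs_neq.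
  have hl : `|h| <= e / (`|K| + 1) by near: h; apply: dnbhs0_le; exact: divr_gt0.
  rewrite distrC; apply: (le_trans (hz' h h0).1).
  apply: (@le_trans _ _ (`|h| * (`|K| + 1))).
    by rewrite ler_wpM2l // (le_trans (ler_norm K)) // lerDl.
  by rewrite -ler_pdivlMr.
apply: cvg_trans (cvg_comp _ _ zx cg); apply: near_eq_cvg.
near=> h.
have h0 : h != 0 by near: h; exact: nbhs_dnbhs_neq.
by rewrite /= (hz' h h0).2.
Unshelve. all: by end_near.
Qed.

Lemma is_derive_line (F : V -> R) (e y : V) (t : R) :
  derivable F (t *: e + y) e ->
  is_derive t 1 (fun s => F (s *: e + y)) ('D_e F (t *: e + y)).
Proof.
move=> d.
have E : (fun h : R => h^-1 *: (((fun s => F (s *: e + y)) \o shift t) (h *: 1)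
            - F (t *: e + y))) =
         (fun h : R => h^-1 *: ((F \o shift (t *: e + y)) (h *: e) - F (t *: e + y))).
  by apply/funext => h /=; rewrite /shift /= [h *: 1]mulr1 scalerDl addrA.
by split; [rewrite /derivable E | rewrite /derive E].
Qed.

Lemma MVT0 (phi dphi : R -> R) :
  (forall t : R, is_derive t 1 phi (dphi t)) ->
  forall t : R, exists2 c : R, `|c| <= `|t| & phi t - phi 0 = t * dphi c.
Proof.
move=> hd t.
have cont a b : {within `[a, b], continuous phi}.
  apply: continuous_subspaceT => x.
  by have [/derivable1_diffP/differentiable_continuous] := hd x.
have [t0|/ltW t0] := leP 0 t.
  have [c /andP[c0 ct] ->] := MVT_segment t0 (fun x _ => hd x) (cont 0 t).
  exists c; last by rewrite subr0 mulrC.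
  by rewrite !ger0_norm // (le_trans c0 ct).
have [c /andP[tc c0] E] := MVT_segment t0 (fun x _ => hd x) (cont t 0).
exists c; first by rewrite !ler0_norm // ?lerN2 // (le_trans tc c0).
by rewrite -opprB E sub0r mulrN opprK mulrC.
Qed.

Lemma cvg_partial_increment (F : V -> R) (e w x : V) (a : R) :
  (forall z, derivable F z e) -> {for x, continuous ('D_e F)} ->
  (fun h : R => h^-1 * (F ((h * a) *: e + (h *: w + x)) - F (h *: w + x)))
     h @[h --> 0^'] --> a * 'D_e F x.
Proof.
move=> hd cD.
have cG : {for x, continuous (fun z => a * 'D_e F z)} by exact: cvgMl_tmp.
apply: (cvg_continuous_witness (K := `|a| * `|e| + `|w|) cG) => h h0.
set y := h *: w + x.
have [c hc E] := MVT0 (fun t => is_derive_line (hd (t *: e + y))) (h * a).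
exists (c *: e + y).
  rewrite /y addrA addrK (le_trans (ler_normD _ _)) // !normrZ mulrDr mulrA.
  by rewrite lerD2r ler_wpM2r // -normrM.
by rewrite scale0r add0r in E; rewrite E mulrA mulKf.
Qed.

Definition second_difference (F : V -> R) (e1 e2 x : V) (h : R) :=
  F (h *: e1 + (h *: e2 + x)) - F (h *: e2 + x) - F (h *: e1 + x) + F x.

Lemma second_differenceC (F : V -> R) (e1 e2 x : V) :
  second_difference F e1 e2 x = second_difference F e2 e1 x.
Proof.
by apply/funext => h; rewrite /second_difference [h *: e1 + _]addrCA; ring.
Qed.

Lemma cvg_second_difference (F : V -> R) (e1 e2 x : V) :
  (forall z, derivable F z e1) ->
  (forall z, derivable ('D_e1 F) z e2) ->
  {for x, continuous ('D_e2 ('D_e1 F))} ->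
  (fun h : R => h^-1 * (h^-1 * second_difference F e1 e2 x h)) h @[h --> 0^'] -->
     'D_e2 ('D_e1 F) x.
Proof.
move=> d1 d2 cD.
apply: (cvg_continuous_witness (K := `|e1| + `|e2|) cD) => h h0.
pose psi s := F (s *: e1 + (h *: e2 + x)) - F (s *: e1 + x).
have dpsi (t : R) : is_derive t 1 psi
    ('D_e1 F (t *: e1 + (h *: e2 + x)) - 'D_e1 F (t *: e1 + x)).
  by apply: is_deriveB; apply: is_derive_line.
have [c hc E1] := MVT0 dpsi h.
have [d hd E2] := MVT0 (fun t => is_derive_line (d2 (t *: e2 + (c *: e1 + x)))) h.
exists (d *: e2 + (c *: e1 + x)).
  rewrite addrA addrK (le_trans (ler_normD _ _)) // !normrZ mulrDr addrC.
  by apply: lerD; apply: ler_wpM2r.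
have -> : second_difference F e1 e2 x h = psi h - psi 0.
  by rewrite /second_difference /psi !scale0r !add0r; ring.
rewrite scale0r add0r in E2.
by rewrite E1 [c *: e1 + _]addrCA E2 !mulKf.
Qed.

Lemma derive_mixedC (F : V -> R) (e1 e2 x : V) :
  (forall z, derivable F z e1) -> (forall z, derivable F z e2) ->
  (forall z, derivable ('D_e1 F) z e2) -> (forall z, derivable ('D_e2 F) z e1) ->
  {for x, continuous ('D_e2 ('D_e1 F))} -> {for x, continuous ('D_e1 ('D_e2 F))} ->
  'D_e2 ('D_e1 F) x = 'D_e1 ('D_e2 F) x.
Proof.
move=> d1 d2 d12 d21 c12 c21.
have := cvg_second_difference d2 d21 c21; rewrite second_differenceC.
exact/cvg_unique/(cvg_second_difference d1 d12 c12).
Qed.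

End DifferenceQuotients.

Section Partials.
Variables (R : realType) (N : nat).
Implicit Types (F : 'rV[R]_N -> R) (v x : 'rV[R]_N).

(* Telescope F (x + h v) - F x along the coordinate axes, one partial derivative at
   a time. *)
Lemma is_derive_continuous_partials F :
  (forall i z, derivable F z 'e_i) -> (forall i, continuous ('D_'e_i F)) ->
  forall x v, is_derive x v F (\sum_i v 0 i * 'D_'e_i F x).
Proof.
move=> hd hc x v.
pose incr (s : seq 'I_N) h := h^-1 * (F (h *: (\sum_(i <- s) v 0 i *: 'e_i) + x) - F x).
have cvg_incr s : incr s h @[h --> 0^'] --> \sum_(i <- s) v 0 i * 'D_'e_i F x.
  elim: s => [|i s IH].
    rewrite big_nil /incr; under eq_fun do rewrite big_nil scaler0 add0r subrr mulr0.
    exact: cvg_cst.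
  rewrite big_cons.
  have -> : incr (i :: s) = fun h =>
      h^-1 * (F ((h * v 0 i) *: 'e_i + (h *: (\sum_(j <- s) v 0 j *: 'e_j) + x))
              - F (h *: (\sum_(j <- s) v 0 j *: 'e_j) + x)) + incr s h.
    apply/funext => h.
    by rewrite /incr -mulrDr addrA subrK big_cons scalerDr scalerA addrA.
  exact: cvgD (cvg_partial_increment (\sum_(j <- s) v 0 j *: 'e_j) (hd i) (hc i x)) IH.
have := cvg_incr (index_enum 'I_N); rewrite /incr -row_sum_delta => L.
have E : (fun h : R => h^-1 *: ((F \o shift x) (h *: v) - F x)) =
         (fun h : R => h^-1 * (F (h *: v + x) - F x)) by [].
split; first by rewrite /derivable E; exact: cvgP L.
by rewrite /derive E; exact: cvg_lim L.
Qed.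

Lemma pder_rcons (s : seq 'I_N) i F :
  pder s (pder [:: i] F) = pder (rcons s i) F.
Proof. by elim: s => [|j s IH] //=; rewrite IH. Qed.

Lemma Ck_le r r' F : (r' <= r)%N -> Ck r F -> Ck r' F.
Proof.
move=> le hF s hs; have [c d] := hF s (leq_trans hs le).
by split => // hs'; apply: d; exact: leq_trans hs' le.
Qed.

Lemma Ck_pder r F i : Ck r.+1 F -> Ck r (pder [:: i] F).
Proof.
move=> hF s hs; rewrite pder_rcons.
have /hF[c d] : (size (rcons s i) <= r.+1)%N by rewrite size_rcons.
by split => // hs'; apply: d; rewrite size_rcons.
Qed.

Lemma hessian_sym F x : Ck 2 F -> (hessian F x)^T = hessian F x.
Proof.
move=> hF; apply/matrixP => i j; rewrite !mxE.
apply: derive_mixedC.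
- by move=> z; exact: ((hF [::] isT).2 isT i z).
- by move=> z; exact: ((hF [::] isT).2 isT j z).
- by move=> z; exact: ((hF [:: i] isT).2 isT j z).
- by move=> z; exact: ((hF [:: j] isT).2 isT i z).
- exact: (hF [:: j; i] isT).1.
- exact: (hF [:: i; j] isT).1.
Qed.

Fixpoint dirpder v k F : 'rV[R]_N -> R :=
  if k is k'.+1 then fun x => \sum_i v 0 i * dirpder v k' (pder [:: i] F) x
  else F.

Lemma is_derive_dirpder v k F : Ck k.+1 F ->
  forall t : R, is_derive t 1 (fun s => dirpder v k F (s *: v)) (dirpder v k.+1 F (t *: v)).
Proof.
elim: k F => [|k IH] F hF t.
  have [dF DF] := is_derive_continuous_partials
    (fun i z => (hF [::] isT).2 isT i z) (fun i => (hF [:: i] isT).1) (t *: v) v.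
  have := @is_derive_line _ _ F v 0 t; rewrite addr0.
  under eq_fun do rewrite addr0.
  by move=> /(_ dF); rewrite DF.
have := is_derive_sum (fun i => is_deriveZ (v 0 i) (IH _ (Ck_pder i hF) t)).
by rewrite fct_sumE.
Qed.

Lemma dirpder2E v F x : dirpder v 2 F x = (v *m hessian F x *m v^T) 0 0.
Proof.
rewrite /= mxE; apply: eq_bigr => k _; rewrite !mxE mulrC; congr (_ * _).
by apply: eq_bigr => i _; rewrite !mxE.
Qed.

End Partials.

Section CompositionWithSquare.
Variable R : realType.

Lemma is_derive_exprn (a : nat) (t : R) :
  is_derive t 1 (fun s : R => s ^+ a) (a%:R * t ^+ a.-1).
Proof.
by split; [exact: exprn_derivable | rewrite exp_derive [_ *: 1]mulr1].
Qed.

Lemma is_derive_comp_sqr (A A' : R -> R) (t : R) :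
  (forall s : R, is_derive s 1 A (A' s)) ->
  is_derive t 1 (fun t => A (t ^+ 2)) (2 * t * A' (t ^+ 2)).
Proof.
move=> hA; have := @is_derive1_comp R A (fun s => s ^+ 2) t _ _ (hA _) (is_derive_exprn 2 t).
by move=> D; apply: is_derive_eq; rewrite /= expr1 mulrC.
Qed.

Lemma is_derive_monomial_comp_sqr (c : R) (a : nat) (A A' : R -> R) (t : R) :
  (forall s : R, is_derive s 1 A (A' s)) ->
  is_derive t 1 (fun t => c * t ^+ a * A (t ^+ 2))
    (c * (a%:R * t ^+ a.-1) * A (t ^+ 2) + c * t ^+ a * (2 * t * A' (t ^+ 2))).
Proof.
move=> hA.
have := is_deriveM (is_deriveZ c (is_derive_exprn a t)) (is_derive_comp_sqr t hA).
move=> D; apply: is_derive_eq.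
have scaleE (x y : R) : x *: y = x * y by [].
by rewrite /= !scaleE; ring.
Qed.

Lemma derive1_is_derive (g dg dg' : R -> R) :
  (forall t : R, is_derive t 1 g (dg t)) -> (forall t, dg t = dg' t) -> derive1 g = dg'.
Proof. by move=> hg e; apply/funext => t; rewrite derive1E derive_val e. Qed.

Lemma derive1n4_comp_sqr0 (H : nat -> R -> R) :
  (forall k, (k < 4)%N -> forall s : R, is_derive s 1 (H k) (H k.+1 s)) ->
  derive1n 4 (fun t => H 0%N (t ^+ 2)) 0 = 12 * H 2%N 0.
Proof.
move=> hH.
have D1 : derive1 (fun t => H 0%N (t ^+ 2)) = fun t => 2 * t ^+ 1 * H 1%N (t ^+ 2).
  by apply: derive1_is_derive (fun t => is_derive_comp_sqr t (hH 0%N isT)) _ => t.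
have D2 : derive1 (fun t => 2 * t ^+ 1 * H 1%N (t ^+ 2)) =
    fun t => 2 * t ^+ 0 * H 1%N (t ^+ 2) + 4 * t ^+ 2 * H 2%N (t ^+ 2).
  apply: derive1_is_derive (fun t => is_derive_monomial_comp_sqr 2 1 t (hH 1%N isT)) _.
  by move=> t; ring.
have D3 : derive1 (fun t => 2 * t ^+ 0 * H 1%N (t ^+ 2) + 4 * t ^+ 2 * H 2%N (t ^+ 2)) =
    fun t => 12 * t ^+ 1 * H 2%N (t ^+ 2) + 8 * t ^+ 3 * H 3%N (t ^+ 2).
  apply: derive1_is_derive (fun t =>
    is_deriveD (is_derive_monomial_comp_sqr 2 0 t (hH 1%N isT))
               (is_derive_monomial_comp_sqr 4 2 t (hH 2%N isT))) _.
  by move=> t; ring.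
rewrite /derive1n /= D1 D2 D3 derive1E.
case: (is_deriveD (is_derive_monomial_comp_sqr 12 1 0 (hH 2%N isT))
                  (is_derive_monomial_comp_sqr 8 3 0 (hH 3%N isT))) => _ ->.
have -> : (0 : R) ^+ 2 = 0 by rewrite expr0n.
by rewrite /=; ring.
Qed.

End CompositionWithSquare.

Lemma quadratic_ge0_lin_coef0 (R : realFieldType) (b c : R) : 0 <= c ->
  (forall t, 0 <= 2 * t * b + t ^+ 2 * c) -> b = 0.
Proof.
move=> c0 H; have c1 : 0 < c + 1 by lra.
have := H (- b / (c + 1)); set t := - b / (c + 1) => Ht.
have tc : t * (c + 1) = - b by rewrite /t mulfVK ?gt_eqF.
have t0 : t = 0 by nra.
by move: tc; rewrite t0 mul0r => /esym /eqP; rewrite oppr_eq0 => /eqP.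
Qed.

Lemma psd_sym_quad0_mulmx (R : realType) N (M : 'M[R]_N) (v : 'rV[R]_N) :
  M^T = M -> psd M -> (v *m M *m v^T) 0 0 = 0 -> M *m v^T = 0.
Proof.
move=> sym hpsd q0.
have bilinC (w : 'rV[R]_N) : v *m M *m w^T = w *m M *m v^T.
  have <- : (v *m M *m w^T)^T = w *m M *m v^T by rewrite !trmx_mul trmxK sym mulmxA.
  by apply/matrixP => i j; rewrite !ord1 [RHS]mxE.
have expand (t : R) (w : 'rV[R]_N) : ((v + t *: w) *m M *m (v + t *: w)^T) 0 0 =
    (v *m M *m v^T) 0 0 + 2 * t * (w *m M *m v^T) 0 0 + t ^+ 2 * (w *m M *m w^T) 0 0.
  rewrite linearD linearZ /= !mulmxDl !mulmxDr -!scalemxAl -!scalemxAr.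
  by rewrite bilinC !mxE; ring.
have lin0 (w : 'rV[R]_N) : (w *m M *m v^T) 0 0 = 0.
  apply: (quadratic_ge0_lin_coef0 (hpsd w)) => t.
  by have := hpsd (v + t *: w); rewrite expand q0 add0r.
apply/matrixP => k l; rewrite (ord1 l) [RHS]mxE.
by have := lin0 'e_k; rewrite -mulmxA -rowE mxE.
Qed.

Lemma derive1_scale_id0 (R : realType) (V : normedModType R) (g : R -> V) :
  {for 0, continuous g} -> derive1 (fun t => t *: g t) 0 = g 0.
Proof.
move=> cg; rewrite derive1E /derive; apply: cvg_lim => //.
apply: cvg_trans (cvg_within_filter _ cg); apply: near_eq_cvg.
near=> h; have h0 : h != 0 by near: h; exact: nbhs_dnbhs_neq.
by rewrite /= addr0 scale0r subr0 [h *: 1]mulr1 scalerA mulVf ?scale1r.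
Unshelve. all: by end_near.
Qed.

Lemma derive1_parabola0 (R : realType) n m (x : 'rV[R]_n) (y : 'rV[R]_m) :
  derive1 (fun t : R => row_mx (t ^+ 2 *: x) (t *: y)) 0 = row_mx 0 y.
Proof.
have -> : (fun t : R => row_mx (t ^+ 2 *: x) (t *: y)) =
          fun t => t *: (t *: row_mx x 0 + row_mx 0 y).
  apply/funext => t.
  by rewrite scale_row_mx add_row_mx scaler0 addr0 add0r scale_row_mx scalerA expr2.
rewrite (derive1_scale_id0 (g := fun t => t *: row_mx x 0 + row_mx 0 y)).
  by rewrite scale0r add0r.
apply: continuousD; last exact: cvg_cst.
exact: continuousZr_tmp.
Qed.

Lemma sqnorm0 (R : realType) N : sqnorm (0 : 'rV[R]_N) = 0.
Proof. by rewrite /sqnorm big1 // => i _; rewrite mxE expr0n. Qed.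

Theorem lemma6p5 (R : realType) (n m : nat)
  (f : 'rV[R]_(n + m) -> R)
  (hf : Ck 5 f)
  (hcrit : forall i : 'I_(n + m), pder [:: i] f 0 = 0)
  (hf0 : f 0 = 0)
  (hm : (1 <= m)%N)
  (hpsd : psd (hessian f 0))
  (hrank : \rank (hessian f 0) = n)
  (hker : forall v : 'rV[R]_(n + m),
      (hessian f 0 *m v^T = 0) <-> (exists y : 'rV[R]_m, v = row_mx 0 y))
  (x2 : 'rV[R]_n) (y1 : 'rV[R]_m)
  (hsph : sqnorm (row_mx x2 y1) = 1)
  (hvan : forall k : nat, (k <= 4)%N ->
      derive1n k (fun t : R => f (row_mx (t ^+ 2 *: x2) (t *: y1))) 0 = 0) :
  y1 != 0 /\ k_active 1 (fun t : R => row_mx (t ^+ 2 *: x2) (t *: y1)).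
Proof.
have y1_neq0 : y1 != 0.
  have hf2 : Ck 2 f by apply: Ck_le hf.
  apply/eqP => y10; move: hsph (hvan 4%N isT); rewrite y10.
  set v := row_mx x2 (0 : 'rV[R]_m) => hsph.
  pose H k (s : R) := dirpder v k f (s *: v).
  have -> : (fun t : R => f (row_mx (t ^+ 2 *: x2) (t *: 0))) = fun t => H 0%N (t ^+ 2).
    by apply/funext => t; rewrite /H /v scale_row_mx !scaler0.
  have dH k : (k < 4)%N -> forall s : R, is_derive s 1 (H k) (H k.+1 s).
    by move=> hk s; apply: is_derive_dirpder; exact: Ck_le (leqW hk) hf.
  rewrite (derive1n4_comp_sqr0 dH).
  move=> /eqP; rewrite mulf_eq0 pnatr_eq0 /= => /eqP.
  rewrite /H scale0r dirpder2E => /psd_sym_quad0_mulmx.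
  move=> /(_ (hessian_sym 0 hf2) hpsd) /hker[y].
  move=> /eq_row_mx[x20 _]; move: hsph; rewrite /v x20 row_mx0 sqnorm0.
  by move=> /eqP; rewrite eq_sym oner_eq0.
split=> //; split=> [i /andP[/leq_trans le /le] //|].
move=> /(_ 1%N isT); rewrite derive1n1 derive1_parabola0 -(row_mx0 _ 1 n m).
by move=> /eq_row_mx[_ /eqP]; apply/negP.
Qed.
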